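(* Let $G=H(T,C)$ be a generalized Halin graph such that $\kappa_{LLY}(u,v)>0$ for every edge $\{u,v\}$ of $G$, and let $x$ be a vertex of $T$ of maximum degree $D(T)$. If $T$ has exactly $D(T)$ leaves and $D(T)\ge 4$, then $d_T(x,y)\le 2$ for every vertex $y$ of $C$.
   Context: All graphs are finite, simple, undirected and connected; $d(\cdot,\cdot)$ is the shortest-path distance in $G$, $d_T(\cdot,\cdot)$ the distance in the tree $T$, and $d_v$ the degree of $v$. Lin-Lu-Yau curvature: for a vertex $v$ and $\alpha\in[0,1]$ let $m_v^\alpha(v)=\alpha$, $m_v^\alpha(u)=(1-\alpha)/d_v$ for neighbors $u$ of $v$, and $0$ elsewhere. For probability measures $m_1,m_2$, $W(m_1,m_2)=\inf_\pi\sum_{u,w}\pi(u,w)d(u,w)$ over couplings $\pi$ of $m_1,m_2$. For an edge $\{u,v\}$, $\kappa_\alpha(u,v)=1-W(m_u^\alpha,m_v^\alpha)$ and $\kappa_{LLY}(u,v)=\lim_{\alpha\to1}\kappa_\alpha(u,v)/(1-\alpha)$. A generalized Halin graph $H(T,C)$ is obtained from a tree $T$ with maximum degree $D(T)\ge3$ together with a planar embedding, by adding a cycle $C$ through all leaves of $T$ in the cyclic order in which they appear in the embedding. *)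

From HB Require Import structures.
From mathcomp Require Import all_boot all_order all_algebra.
From mathcomp Require Import all_classical all_reals all_analysis.
Set Implicit Arguments. Unset Strict Implicit. Unset Printing Implicit Defensive.
Import Order.TTheory GRing.Theory Num.Theory.
Import numFieldNormedType.Exports.

Section Graphs.
Variable V : finType.
Implicit Types (e t : rel V) (rho : V -> V -> V).

Definition simple_graph e := symmetric e /\ irreflexive e.

Definition deg e (v : V) : nat := #|[set y | e v y]|.

Definition maxdeg e : nat := \max_(v : V) deg e v.

Definition leaf e (v : V) : bool := deg e v == 1%N.

(** ball of radius n around x, and shortest-path distance d(x,y)
    (the graphs considered are connected, so the search up to #|V| suffices) *)
Fixpoint ball e (n : nat) (x : V) : {set V} :=
  match n with
  | 0 => [set x]
  | n'.+1 => ball e n' x :|: [set z | [exists w in ball e n' x, e w z]]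
  end.

Definition dist e (x y : V) : nat :=
  find (fun n => y \in ball e n x) (iota 0 #|V|.+1).

Definition acyclic e := forall p : seq V, (3 <= size p)%N -> ~ ucycle e p.
Definition is_tree t :=
  simple_graph t /\ (forall x y, connect t x y) /\ acyclic t.

(** A planar embedding of a tree is given by a rotation system: for every
    vertex v, [rho v] is a cyclic permutation of the neighbours of v
    (every rotation system of a tree is a planar embedding). *)
Definition rotation_system t rho :=
  forall v,
    (forall u, t v u -> t v (rho v u)) /\
    {in [pred u | t v u] &, injective (rho v)} /\
    (forall u w, t v u -> t v w -> fconnect (rho v) u w).

(** boundary (face) walk of the embedded tree on darts (a,b):
    (a,b) |-> (b, rho b a) *)
Definition face_step rho (d : V * V) : V * V := (d.2, rho d.2 d.1).

Definition leaf_nb t (l : V) : V := odflt l [pick y | t l y].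

(** the next leaf after the leaf l in the cyclic order in which the leaves
    are met along the boundary walk of the embedding *)
Definition next_leaf t rho (l : V) : V :=
  let tr := traject (face_step rho) (l, leaf_nb t l) (2 * #|V|) in
  (nth (l, l) tr (find (fun d => leaf t d.2) tr)).2.

(** Generalized Halin graph H(T,C): tree T (given by t), planar embedding
    (rotation system rho), D(T) >= 3, and the cycle C through all leaves in
    their cyclic order. *)
Definition gen_halin t rho :=
  is_tree t /\ rotation_system t rho /\ (3 <= maxdeg t)%N.

Definition halin_cycle t rho : rel V := fun x y =>
  [&& leaf t x, leaf t y & (next_leaf t rho x == y) || (next_leaf t rho y == x)].

Definition halin_adj t rho : rel V := fun x y => t x y || halin_cycle t rho x y.

End Graphs.

Section Curvature.
Local Open Scope classical_set_scope.
Local Open Scope ring_scope.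
Variables (R : realType) (V : finType).
Implicit Types (e : rel V).

Definition mass e (a : R) (v : V) : V -> R := fun z =>
  if z == v then a else if e v z then (1 - a) / (deg e v)%:R else 0.

Definition coupling (m1 m2 : V -> R) (pi : V -> V -> R) :=
  (forall x y, 0 <= pi x y) /\
  (forall x, \sum_(y : V) pi x y = m1 x) /\
  (forall y, \sum_(x : V) pi x y = m2 y).

Definition W1 e (m1 m2 : V -> R) : R :=
  inf [set c : R | exists pi, coupling m1 m2 pi /\
                   c = \sum_(x : V) \sum_(y : V) pi x y * (dist e x y)%:R].

Definition kappa_alpha e (a : R) (u v : V) : R :=
  1 - W1 e (mass e a u) (mass e a v).

Definition kappa_LLY_is e (u v : V) (k : R) :=
  (fun a : R => kappa_alpha e a u v / (1 - a)) @ at_left (1 : R) --> k.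

End Curvature.

From Pilot Require Import Defs.
From HB Require Import structures.
From mathcomp Require Import all_boot all_order all_algebra.
From mathcomp Require Import all_classical all_reals all_analysis.
From mathcomp Require Import zify ring lra.
Import Order.TTheory GRing.Theory Num.Theory.
Set Implicit Arguments. Unset Strict Implicit. Unset Printing Implicit Defensive.

(* Suppose a leaf y is at distance at least 3 from x in T, and let a be the
   neighbour of x towards y.  Every branch of T - x contains a leaf and the
   branch of a contains y, so, T having only deg x leaves, every neighbour of a
   other than x is internal.  Hence G agrees with T around the edge ax, which
   lies on no triangle and no 4-cycle.  The function equal to 1 on a and its
   other neighbours, 0 on their remaining neighbours and -1 elsewhere is
   1-Lipschitz, and pairing it with m_a - m_x gives
   W(m_a, m_x) >= 1 + (1 - alpha)(1 - 1/deg a - 2/deg x) >= 1, as deg a >= 2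
   and deg x >= 4.  Thus kappa_alpha(a, x) <= 0 for all alpha, and
   kappa_LLY(a, x) <= 0. *)

Section Degrees.
Variables (V : finType) (t : rel V).

Lemma two_nbrs_nonleaf z u w : t z u -> t z w -> u != w -> ~~ leaf t z.
Proof.
move=> tzu tzw uw; rewrite /leaf /deg; apply/negP => /eqP h.
have : (#|[set u; w]| <= #|[set y | t z y]|)%N.
  by apply: subset_leq_card; apply/fintype.subsetP => v; rewrite !inE => /orP[] /eqP ->.
by rewrite h cards2 uw.
Qed.

Lemma nonleaf_deg_ge2 z u : t z u -> ~~ leaf t z -> (2 <= deg t z)%N.
Proof.
move=> tzu; have : (0 < deg t z)%N.
  by rewrite /deg card_gt0; apply/set0Pn; exists u; rewrite inE.
by rewrite /leaf; lia.
Qed.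

End Degrees.

Section Distance.
Variables (V : finType) (e : rel V).

Lemma path_last_in_ball u s : path e u s -> last u s \in Defs.ball e (size s) u.
Proof.
elim/last_ind: s => [|s z IH]; first by rewrite /= inE.
rewrite rcons_path last_rcons size_rcons => /andP[ps ez] /=.
rewrite finset.in_setU inE; apply/orP; right.
by apply/existsP; exists (last u s); rewrite IH.
Qed.

Lemma dist_le_size_path u s :
  path e u s -> (size s <= #|V|)%N -> (dist e u (last u s) <= size s)%N.
Proof.
move=> /path_last_in_ball zb sV; rewrite /dist leqNgt; apply/negP => /(before_find 0).
by rewrite nth_iota ?add0n ?ltnS // zb.
Qed.

Variable R : realType.
Implicit Type f : V -> R.
Local Open Scope ring_scope.

Lemma lipschitz_ball f :
  (forall z w, e z w -> f z - f w <= 1) ->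
  forall n u z, z \in Defs.ball e n u -> f u - f z <= n%:R.
Proof.
move=> lip; elim=> [|n IH] u z /=; first by rewrite inE => /eqP ->; rewrite subrr.
rewrite finset.in_setU => /orP[/IH h|]; first by rewrite (le_trans h) // ler_nat.
rewrite inE => /existsP[w /andP[wb ewz]].
by have := IH _ _ wb; have := lip _ _ ewz; rewrite -natr1; lra.
Qed.

(* When z is not reachable from u, [dist e u z] is the junk value #|V|.+1,
   which the global bound 2 handles. *)
Lemma lipschitz_dist f :
  (forall z w, e z w -> f z - f w <= 1) -> (forall z w, f z - f w <= 2) ->
  forall u z, f u - f z <= (dist e u z)%:R.
Proof.
move=> lip bnd u z; rewrite /dist; set P := fun n => z \in Defs.ball e n u.
have [hP|hP] := boolP (has P (iota 0 #|V|.+1)).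
  have := nth_find 0 hP; rewrite nth_iota; last by move: hP; rewrite has_find size_iota.
  by rewrite add0n => /(lipschitz_ball lip).
rewrite (hasNfind hP) size_iota.
apply: (le_trans (bnd u z)).
have : (1 <= #|V|)%N by rewrite -(cards1 u) max_card.
by rewrite -(ler_nat R) -natr1; lra.
Qed.

End Distance.

Fixpoint nonbacktracking {T : eqType} (s : seq T) : bool :=
  if s is a :: s' then
    (if s' is _ :: c :: _ then a != c else true) && nonbacktracking s'
  else true.

Definition del_vertex (V : finType) (t : rel V) (x : V) : rel V :=
  [rel u v | [&& t u v, u != x & v != x]].

Definition short_cycle_free (V : finType) (e : rel V) (u v : V) :=
  forall b, e v b -> b != u -> ~~ e u b /\ (forall w, e u w -> w != v -> ~~ e b w).

Section Trees.
Variables (V : finType) (t : rel V).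
Hypotheses (t_sym : symmetric t) (t_irr : irreflexive t) (t_acyclic : acyclic t).

(* A repeated vertex would close a cycle, of length at least 3 since the walk
   does not backtrack. *)
Lemma nonbacktracking_path_uniq s a :
  path t a s -> nonbacktracking (a :: s) -> uniq (a :: s).
Proof.
elim: s a => [|b s IH] a //= /andP[tab ps] /andP[nb1 nb2].
have us : uniq (b :: s) by exact: IH.
move: (us) => /= /andP[-> ->]; rewrite !andbT; apply/negP => ain.
set j := index a (b :: s).
have jlt : (j < size (b :: s))%N by rewrite index_mem.
have jb : nth a (b :: s) j = a by rewrite nth_index.
have j2 : (2 <= j)%N.
  move: jb; rewrite /j; case: (index a (b :: s)) => [|[|j']] //=.
  - by move=> eb; move: tab; rewrite eb t_irr.
  - move: ain; case: s {IH us ps nb2 jlt j} nb1 => [|c s2] /=.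
    + by rewrite inE => _ /eqP eab; move: tab; rewrite eab t_irr.
    + by move=> nac _ eca; move: nac; rewrite eca eqxx.
apply: (t_acyclic (p := a :: take j (b :: s))).
  by rewrite /= size_takel ?ltnS // ltnW.
apply/andP; split.
  by rewrite /cycle -{2}jb -take_nth //; apply: take_path; rewrite /= tab.
by rewrite /= take_uniq // andbT in_take_leq ?ltnn // ltnW.
Qed.

Lemma path_del_vertex_notin x s u : path (del_vertex t x) u s -> x \notin s.
Proof.
elim: s u => [|v s IH] u //= /andP[/and3P[_ _ vx] ps].
by rewrite inE negb_or eq_sym vx (IH v).
Qed.

Lemma path_del_vertex x s u : path t u s -> x \notin u :: s -> path (del_vertex t x) u s.
Proof.
elim: s u => [|v s IH] u //= /andP[tuv ps].
rewrite !inE !negb_or => /and3P[ux vx xs].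
rewrite /del_vertex /= tuv eq_sym ux eq_sym vx /=; apply: IH => //.
by rewrite inE negb_or vx.
Qed.

Lemma del_vertex_sym x : symmetric (del_vertex t x).
Proof. by move=> u v; rewrite /del_vertex /= t_sym [(u != x) && _]andbC. Qed.

Lemma del_vertex_connect_nbr_eq x b b' :
  t x b -> t x b' -> connect (del_vertex t x) b b' -> b = b'.
Proof.
move=> txb txb' /connectP[p pp eb'].
case: (shortenP pp) eb' => -[|c q] pq uq _ /= eb'; first by rewrite eb'.
case: (eqVneq b b') => // bb'; exfalso.
apply: (t_acyclic (p := [:: x, b, c & q])) => //.
have pq_t : path t b (c :: q) by apply: sub_path pq => u v /and3P[].
apply/andP; split.
  by move: pq_t; rewrite /cycle /= rcons_path txb -eb' [t b' x]t_sym txb' => /andP[-> ->].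
have xb : x != b by apply: contraTneq txb => ->; rewrite t_irr.
by rewrite cons_uniq in_cons negb_or xb (path_del_vertex_notin pq) uq.
Qed.

Lemma tree_short_cycle_free x a : t x a -> short_cycle_free t a x.
Proof.
move=> txa b txb ba.
have nbr_neq u : t x u -> u != x by move=> txu; apply: contraTneq txu => ->; rewrite t_irr.
have ax := nbr_neq _ txa; have bx := nbr_neq _ txb.
have not_linked : ~ connect (del_vertex t x) a b.
  by move=> /(del_vertex_connect_nbr_eq txa txb) eab; rewrite eab eqxx in ba.
split=> [|w taw wx].
  apply: contra_notN not_linked => tab.
  by apply: connect1; rewrite /del_vertex /= tab ax bx.
apply: contra_notN not_linked => tbw.
apply: (connect_trans (y := w)); apply: connect1.
  by rewrite /del_vertex /= taw ax wx.
by rewrite /del_vertex /= t_sym tbw wx bx.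
Qed.

Definition step_away (p c : V) : V := odflt c [pick z | t c z && (z != p)].

Fixpoint greedy_walk (n : nat) (p c : V) : seq V :=
  match n with
  | 0 => [::]
  | n'.+1 =>
      if leaf t c then [::] else step_away p c :: greedy_walk n' c (step_away p c)
  end.

Lemma step_awayP p c :
  t p c -> ~~ leaf t c -> t c (step_away p c) && (step_away p c != p).
Proof.
move=> tpc; rewrite /step_away; case: pickP => [z -> //|none].
suff : [set y | t c y] = [set p] by rewrite /leaf /deg => ->; rewrite cards1.
apply/setP => z; rewrite !inE; have /= := none z.
by case: (eqVneq z p) => [->|_]; [rewrite t_sym tpc|rewrite andbT => ->].
Qed.

Lemma greedy_walk_path n p c :
  t p c ->
  path t p (c :: greedy_walk n p c) && nonbacktracking [:: p, c & greedy_walk n p c].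
Proof.
elim: n p c => [|n IH] p c tpc /=; first by rewrite tpc.
case: ifP => lc /=; first by rewrite tpc.
have /andP[tcs sp] := step_awayP tpc (negbT lc).
have /andP[/= /andP[_ ->] /= /andP[-> /andP[-> ->]]] := IH _ _ tcs.
by rewrite tpc tcs eq_sym sp.
Qed.

Lemma greedy_walk_end n p c :
  leaf t (last c (greedy_walk n p c)) \/ size (greedy_walk n p c) = n.
Proof.
elim: n p c => [|n IH] p c /=; first by right.
case: ifP => lc /=; first by left.
by case: (IH c (step_away p c)) => [h|->]; [left|right].
Qed.

(* Acyclicity makes the non-backtracking walk simple, so it reaches a leaf
   before it could exhaust V. *)
Lemma exists_branch_leaf x b :
  t x b -> exists2 l, leaf t l & connect (del_vertex t x) b l.
Proof.
move=> txb; have /andP[pw nw] := greedy_walk_path #|V| txb.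
have uw := nonbacktracking_path_uniq pw nw.
exists (last b (greedy_walk #|V| x b)).
  case: (greedy_walk_end #|V| x b) => // hs; exfalso.
  move/card_uniqP: uw; rewrite /= hs => hc.
  by have := max_card (mem [:: x, b & greedy_walk #|V| x b]); rewrite hc; lia.
apply/connectP; exists (greedy_walk #|V| x b) => //.
apply: path_del_vertex; first by move: pw => /andP[].
by move: uw => /andP[].
Qed.

Definition branch_leaf x b : V :=
  odflt b [pick l | leaf t l && connect (del_vertex t x) b l].

Lemma branch_leafP x b :
  t x b -> leaf t (branch_leaf x b) /\ connect (del_vertex t x) b (branch_leaf x b).
Proof.
move=> txb; rewrite /branch_leaf; case: pickP => [l /andP[]//|none].
by have [l ll cbl] := exists_branch_leaf txb; move: (none l); rewrite ll cbl.
Qed.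

Lemma deg_lt_card_leaves x a l1 l2 :
  t x a -> leaf t l1 -> leaf t l2 -> l1 != l2 ->
  connect (del_vertex t x) a l1 -> connect (del_vertex t x) a l2 ->
  (deg t x < #|[set l | leaf t l]|)%N.
Proof.
move=> txa ll1 ll2 l12 cal1 cal2.
pose B := [set z | t x z] :\ a.
have inB b : b \in B -> t x b /\ b != a by rewrite !inE => /andP[-> ->].
have link_eq b b' z : t x b -> t x b' ->
    connect (del_vertex t x) b z -> connect (del_vertex t x) b' z -> b = b'.
  move=> txb txb' cbz cb'z; apply: del_vertex_connect_nbr_eq txb txb' _.
  by apply: (connect_trans cbz); rewrite (sym_connect_sym (del_vertex_sym x)).
have notin_img l : connect (del_vertex t x) a l -> l \notin branch_leaf x @: B.
  move=> cal; apply/imsetP => -[b /inB[txb ba] el]; rewrite el in cal.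
  by move/eqP: ba; apply; exact: (link_eq _ _ _ txb txa (proj2 (branch_leafP txb)) cal).
have inj : {in B &, injective (branch_leaf x)}.
  move=> b b' /inB[txb _] /inB[txb' _] ebb'.
  apply: (link_eq _ _ _ txb txb' (proj2 (branch_leafP txb))).
  by rewrite ebb'; exact: (proj2 (branch_leafP txb')).
have sub : l1 |: (l2 |: branch_leaf x @: B) \subset [set l | leaf t l].
  apply/fintype.subsetP => z; rewrite !inE.
  case/orP=> [/eqP->|/orP[/eqP->|/imsetP[b /inB[txb _] ->]]] //.
  by have [] := branch_leafP txb.
apply: leq_trans (subset_leq_card sub).
have -> : deg t x = #|B|.+1 by rewrite /deg (cardsD1 a) inE txa.
by rewrite !cardsU1 card_in_imset // in_setU1 negb_or l12 !notin_img.
Qed.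

Lemma far_vertex_branch x y :
  connect t x y -> ~~ (dist t x y <= 2)%N ->
  exists a, [/\ t x a, ~~ leaf t a, connect (del_vertex t x) a y & ~~ t a y].
Proof.
move=> /connectP[p0 pp0 ey] far.
case: (shortenP pp0) ey => p pp up _ ey.
have [sp|long] := leqP (size p) 2.
  have pV : (size p <= #|V|)%N.
    by move/card_uniqP: up => /= cp; have := max_card (mem (x :: p)); rewrite cp => /ltnW.
  by move: far; rewrite ey (leq_trans (dist_le_size_path pp pV) sp).
case: p pp up ey long => [|a1 [|a2 [|a3 q]]] //= pp up ey _.
move: pp up => /and4P[xa1 a1a2 a2a3 pq] /and5P[xn a1n a2n a3n uq].
have xa2 : x != a2 by move: xn; rewrite !inE !negb_or => /and3P[_ -> _].
exists a1; split=> //.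
- by apply: (two_nbrs_nonleaf (u := x) _ a1a2 xa2); rewrite t_sym.
- apply/connectP; exists [:: a2, a3 & q]; last by rewrite ey.
  by apply: path_del_vertex xn; rewrite /= a1a2 a2a3 pq.
apply/negP => ta1y; apply: (t_acyclic (p := [:: a1, a2, a3 & q])) => //.
apply/andP; split; last by rewrite /= a1n a2n a3n uq.
by rewrite /cycle /= rcons_path a1a2 a2a3 pq -ey [t y a1]t_sym ta1y.
Qed.

End Trees.

Section Halin.
Variables (V : finType) (t : rel V) (rho : V -> V -> V).
Local Notation G := (halin_adj t rho).

Lemma halin_adj_nonleafl z w : ~~ leaf t z -> G z w = t z w.
Proof. by move=> /negbTE nlz; rewrite /halin_adj /halin_cycle nlz orbF. Qed.

Lemma halin_adj_nonleafr z w : ~~ leaf t w -> G z w = t z w.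
Proof. by move=> /negbTE nlw; rewrite /halin_adj /halin_cycle nlw andbF orbF. Qed.

Lemma halin_adj_sym : symmetric t -> symmetric G.
Proof.
move=> t_sym z w; rewrite /halin_adj /halin_cycle t_sym; congr (_ || _).
by rewrite andbCA orbC.
Qed.

Lemma deg_halin_nonleaf z : ~~ leaf t z -> deg G z = deg t z.
Proof.
by move=> nlz; apply: eq_card => w; rewrite !inE halin_adj_nonleafl.
Qed.

Lemma halin_short_cycle_free u v :
  ~~ leaf t u -> ~~ leaf t v -> (forall w, t u w -> w != v -> ~~ leaf t w) ->
  short_cycle_free t u v -> short_cycle_free G u v.
Proof.
move=> nlu nlv nl_nbr scf b; rewrite halin_adj_nonleafl // => tvb bu.
rewrite halin_adj_nonleafl //; have [-> nbw] := scf b tvb bu; split=> // w.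
by rewrite halin_adj_nonleafl // => tuw wv; rewrite halin_adj_nonleafr ?nbw ?nl_nbr.
Qed.

End Halin.

Section Curvature.
Variables (R : realType) (V : finType) (e : rel V).
Implicit Types (f g : V -> R).
Local Open Scope ring_scope.

Lemma W1_ge_lipschitz f (m1 m2 : V -> R) :
  (forall u z, f u - f z <= (dist e u z)%:R) ->
  (exists pi, coupling m1 m2 pi) ->
  \sum_z f z * m1 z - \sum_z f z * m2 z <= W1 e m1 m2.
Proof.
move=> lip [pi0 cp0]; apply: lb_le_inf.
  by exists (\sum_x \sum_y pi0 x y * (dist e x y)%:R); exists pi0.
move=> c [pi [[pi_ge0 [pi_m1 pi_m2]] ->]].
have -> : \sum_z f z * m1 z - \sum_z f z * m2 z = \sum_x \sum_y pi x y * (f x - f y).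
  under eq_bigr do rewrite -pi_m1 mulr_sumr.
  under [X in _ - X]eq_bigr do rewrite -pi_m2 mulr_sumr.
  rewrite [X in _ - X]exchange_big -sumrB; apply: eq_bigr => x _.
  by rewrite -sumrB; apply: eq_bigr => y _; rewrite mulrBr [f x * _]mulrC [f y * _]mulrC.
by apply: ler_sum => x _; apply: ler_sum => y _; apply: ler_wpM2l.
Qed.

Lemma sum_mass (a : R) u g :
  ~~ e u u ->
  \sum_z g z * mass e a u z =
    g u * a + (1 - a) / (deg e u)%:R * \sum_(z in [set z | e u z]) g z.
Proof.
move=> /negbTE euu; rewrite (bigD1 u) //= /mass eqxx; congr (_ + _).
rewrite big_mkcond [in RHS]big_mkcond mulr_sumr; apply: eq_bigr => z _ /=.
rewrite inE; case: (eqVneq z u) => [->|zu] /=; first by rewrite euu mulr0.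
by case: (e u z); rewrite ?mulr0 ?mul0r // mulrC.
Qed.

Lemma sum_mass_eq1 (a : R) u : ~~ e u u -> (0 < deg e u)%N -> \sum_z mass e a u z = 1.
Proof.
move=> euu du; have := sum_mass a (fun=> 1) euu; under eq_bigr do rewrite mul1r.
move=> ->; rewrite sumr_const -/(deg e u) mul1r -mulr_natr divfK; first by ring.
by rewrite mul1r pnatr_eq0 -lt0n.
Qed.

Lemma mass_ge0 (a : R) u z : 0 <= a <= 1 -> 0 <= mass e a u z.
Proof.
move=> /andP[a0 a1]; rewrite /mass; case: ifP => // _; case: ifP => // _.
by apply: divr_ge0; rewrite ?subr_ge0.
Qed.

Lemma coupling_mass (a : R) u v :
  ~~ e u u -> ~~ e v v -> (0 < deg e u)%N -> (0 < deg e v)%N -> 0 <= a <= 1 ->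
  exists pi, coupling (mass e a u) (mass e a v) pi.
Proof.
move=> euu evv du dv ha; exists (fun z w => mass e a u z * mass e a v w).
split; first by move=> z w; apply: mulr_ge0; apply: mass_ge0.
split=> z; first by rewrite -mulr_sumr sum_mass_eq1 ?mulr1.
by rewrite -mulr_suml sum_mass_eq1 ?mul1r.
Qed.

Lemma kappa_LLY_le0 u v (k : R) :
  kappa_LLY_is e u v k -> (forall a : R, 0 < a < 1 -> kappa_alpha e a u v <= 0) -> k <= 0.
Proof.
move=> hk hle; rewrite leNgt; apply/negP => k_gt0.
have near_pos : \forall a \near at_left (1:R), 0 < kappa_alpha e a u v / (1 - a).
  exact: cvgr_gt k hk 0 k_gt0.
have near_gt0 : \forall a \near at_left (1:R), 0 < a by apply: nbhs_left_gt; exact: ltr01.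
have near_lt1 : \forall a \near at_left (1:R), a < 1 by exact: withinT.
have FF : ProperFilter (at_left (1:R)) by exact: at_left_proper_filter.
have [a [ka_pos [a_gt0 a_lt1]]] :=
  @filter_ex _ _ FF _ (filterI near_pos (filterI near_gt0 near_lt1)).
move: ka_pos; rewrite ltNge => /negP; apply.
by apply: mulr_le0_ge0; rewrite ?hle ?a_gt0 // invr_ge0 subr_ge0 ltW.
Qed.

Definition tent (A : pred V) (z : V) : R :=
  if A z then 1 else if [exists w, A w && e z w] then 0 else -1.

Lemma tent_lipschitz A : symmetric e -> forall z w, e z w -> tent A z - tent A w <= 1.
Proof.
move=> esym z w ezw; rewrite /tent.
have [Az|_] := boolP (A z).
  have -> : [exists w', A w' && e w w'] by apply/existsP; exists z; rewrite Az esym.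
  by case: (A w); lra.
by repeat case: ifP => _; lra.
Qed.

Lemma tent_diff_le2 A z w : tent A z - tent A w <= 2.
Proof. by rewrite /tent; repeat case: ifP => _; lra. Qed.

Lemma sum_nbrs_const_but g u v c :
  e u v -> (forall w, e u w -> w != v -> g w = c) ->
  \sum_(z in [set z | e u z]) g z = g v + c * ((deg e u)%:R - 1).
Proof.
move=> euv gc; rewrite (big_setD1 v) ?inE //=; congr (_ + _).
rewrite (eq_bigr (fun=> c)) => [|w]; last by rewrite !inE => /andP[wv euw]; apply: gc.
by rewrite sumr_const /deg (cardsD1 v [set z | e u z]) inE euv add1n -natr1 addrK mulr_natr.
Qed.

Lemma curvature_slack (a d D : R) :
  2 <= d -> 4 <= D -> a <= 1 ->
  1 <= a + (1 - a) / d * (d - 1) - (1 - a) / D * (1 - (D - 1)).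
Proof.
move=> d2 D4 a1.
have d0 : d != 0 by rewrite gt_eqF // (lt_le_trans _ d2).
have D0 : D != 0 by rewrite gt_eqF // (lt_le_trans _ D4).
rewrite -subr_ge0.
have -> : a + (1 - a) / d * (d - 1) - (1 - a) / D * (1 - (D - 1)) - 1 =
          (1 - a) * (1 - d^-1 - 2 * D^-1) by field; rewrite d0 D0.
have dV : d * d^-1 = 1 by rewrite mulfV.
have DV : D * D^-1 = 1 by rewrite mulfV.
have dV0 : 0 <= d^-1 by rewrite invr_ge0 (le_trans _ d2).
have DV0 : 0 <= D^-1 by rewrite invr_ge0 (le_trans _ D4).
apply: mulr_ge0; first by lra.
by nra.
Qed.

Lemma kappa_alpha_le0 u v (a : R) :
  symmetric e -> ~~ e u u -> ~~ e v v -> e u v ->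
  (2 <= deg e u)%N -> (4 <= deg e v)%N -> short_cycle_free e u v ->
  0 <= a <= 1 -> kappa_alpha e a u v <= 0.
Proof.
move=> esym euu evv euv du Dv scf ha.
pose A z := (z == u) || e u z && (z != v).
pose f := tent A.
have vu : v != u by apply: contraTneq euv => ->.
have fu : f u = 1 by rewrite /f /tent /A eqxx.
have fv : f v = 0.
  rewrite /f /tent /A (negbTE vu) eqxx andbF /=.
  by case: existsP => // -[]; exists u; rewrite eqxx esym.
have f_nbr_u w : e u w -> w != v -> f w = 1.
  by move=> euw wv; rewrite /f /tent /A euw wv orbT.
have f_nbr_v b : e v b -> b != u -> f b = -1.
  move=> evb bu; have [nub nbw] := scf b evb bu.
  rewrite /f /tent /A (negbTE bu) (negbTE nub) /=.
  case: existsP => // -[w /andP[/orP[/eqP->|/andP[euw wv]] ebw]].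
  - by move: nub; rewrite esym ebw.
  - by move: (nbw w euw wv); rewrite ebw.
have f_lip := lipschitz_dist (tent_lipschitz A esym) (tent_diff_le2 A).
have du0 : (0 < deg e u)%N by apply: leq_trans du.
have dv0 : (0 < deg e v)%N by apply: leq_trans Dv.
rewrite /kappa_alpha subr_le0.
apply: le_trans (W1_ge_lipschitz f_lip (coupling_mass euu evv du0 dv0 ha)).
have evu : e v u by rewrite esym.
rewrite !sum_mass // (sum_nbrs_const_but euv f_nbr_u) (sum_nbrs_const_but evu f_nbr_v).
rewrite -/f fu fv !mul1r mul0r !add0r mulN1r.
by apply: curvature_slack; rewrite ?ler_nat //; case/andP: ha.
Qed.

End Curvature.

Theorem corollary3p3 (R : realType) (V : finType) (t : rel V)
    (rho : V -> V -> V) (x : V) :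
  gen_halin t rho ->
  (forall u v, halin_adj t rho u v ->
     exists k : R, (0 < k)%R /\ kappa_LLY_is (halin_adj t rho) u v k) ->
  deg t x = maxdeg t ->
  #|[set y | leaf t y]| = maxdeg t ->
  (4 <= maxdeg t)%N ->
  forall y : V, leaf t y -> (dist t x y <= 2)%N.
Proof.
move=> [[[t_sym t_irr] [t_conn t_acyc]] _] curv_pos degx nleaves D4 y ly.
apply/contraT => far.
have [a [txa nla cay nay]] := far_vertex_branch t_sym t_acyc (t_conn x y) far.
have ax : a != x by apply: contraTneq txa => ->; rewrite t_irr.
have nlx : ~~ leaf t x by rewrite /leaf degx; apply: contraTneq D4 => ->.
have nl_nbr c : t a c -> c != x -> ~~ leaf t c.
  move=> tac cx; apply/negP => lc.
  have yc : y != c by apply: contraNneq nay => ->.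
  have cac : connect (del_vertex t x) a c by apply: connect1; rewrite /del_vertex /= tac ax.
  have := deg_lt_card_leaves t_sym t_irr t_acyc txa ly lc yc cay cac.
  by rewrite degx nleaves ltnn.
have tax : t a x by rewrite t_sym.
have Gax : halin_adj t rho a x by rewrite /halin_adj tax.
have [k [k_gt0 hk]] := curv_pos a x Gax.
suff : (k <= 0)%R by rewrite leNgt k_gt0.
apply: (kappa_LLY_le0 hk) => b /andP[b_gt0 b_lt1].
apply: kappa_alpha_le0; rewrite ?deg_halin_nonleaf ?halin_adj_nonleafl ?t_irr ?degx //.
- exact: halin_adj_sym.
- exact: nonleaf_deg_ge2 tax nla.
- by apply: halin_short_cycle_free => //; exact: tree_short_cycle_free.
- by rewrite !ltW.
Qed.
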